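(* Let $K\subseteq\mathbb{R}$ be compact. Then $C^1(K)=C^1(\mathbb{R}|K)$ if and only if $\sigma(\xi)<\infty$ for all $\xi\in K$.
   Context: $C^1(K)$ is the set of $f:K\to\mathbb{R}$ admitting a continuous $f':K\to\mathbb{R}$ with $\lim_{y\to x,\,y\in K\setminus\{x\}}\frac{f(y)-f(x)-f'(x)(y-x)}{|y-x|}=0$ for all $x\in K$; $C^1(\mathbb{R}|K)=\{g|_K: g\in C^1(\mathbb{R})\}$. A gap of $K$ is a bounded connected component of $\mathbb{R}\setminus K$ (a maximal bounded open interval in the complement); $\ell(G)$ denotes its length. For $\xi\in K$ and $\varepsilon>0$, $\sigma_\varepsilon(\xi)=\sup\left\{\frac{\sup\{|y-\xi|:y\in G\}}{\ell(G)}: G\subseteq(\xi-\varepsilon,\xi+\varepsilon) \text{ a gap of } K\right\}\in[0,\infty]$ with $\sup\emptyset=0$, and $\sigma(\xi)=\lim_{\varepsilon\to0}\sigma_\varepsilon(\xi)$. *)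

From Stdlib Require Import Reals Rtopology.
Open Scope R_scope.

Definition C1_on (K : R -> Prop) (f : R -> R) : Prop :=
  exists f' : R -> R,
    (forall x, K x -> forall eps, 0 < eps -> exists delta, 0 < delta /\
       forall y, K y -> Rabs (y - x) < delta -> Rabs (f' y - f' x) < eps) /\
    (forall x, K x -> forall eps, 0 < eps -> exists delta, 0 < delta /\
       forall y, K y -> y <> x -> Rabs (y - x) < delta ->
         Rabs ((f y - f x - f' x * (y - x)) / Rabs (y - x)) < eps).

Definition C1_R (g : R -> R) : Prop :=
  exists g' : R -> R, (forall x, derivable_pt_lim g x (g' x)) /\ continuity g'.

Definition C1_restr (K : R -> Prop) (f : R -> R) : Prop :=
  exists g : R -> R, C1_R g /\ forall x, K x -> g x = f x.

(* The open interval (a,b) is a gap of K: a bounded connected component of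
   R \ K, i.e. a maximal bounded open interval in the complement.  For an
   interval (a,b) with a < b contained in the complement, maximality is
   exactly that both endpoints lie in K. *)
Definition gap (K : R -> Prop) (a b : R) : Prop :=
  a < b /\ (forall x, a < x < b -> ~ K x) /\ K a /\ K b.

(* sup { |y - xi| : y in (a,b) } / l((a,b)) *)
Definition gap_ratio (xi a b : R) : R :=
  Rmax (Rabs (a - xi)) (Rabs (b - xi)) / (b - a).

Definition sigma_eps_le (K : R -> Prop) (xi eps M : R) : Prop :=
  forall a b, gap K a b -> xi - eps <= a -> b <= xi + eps -> gap_ratio xi a b <= M.

(* sigma(xi) = lim_{eps->0} sigma_eps(xi) < infinity.  Since sigma_eps(xi) is
   nondecreasing in eps, the limit is an infimum, so it is finite iff
   sigma_eps(xi) is finite for some eps > 0. *)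
Definition sigma_finite (K : R -> Prop) (xi : R) : Prop :=
  exists eps M, 0 < eps /\ sigma_eps_le K xi eps M.

(* If sigma is finite on K, a function f in C^1(K) with derivative f' is extended by the
   cubic Hermite interpolant of (f, f') on every gap and by tangent lines beyond the
   extreme points of K.  Near x in K, a gap (a, b) on one side of x satisfies
   |a - x|, |b - x| <= M (b - a), so the slope of f across it, f'(a) and f'(b) are all
   close to f'(x); hence the interpolant and its derivative stay o(|y - x|)-, resp.
   o(1)-close to the tangent of f at x.  A single gap with endpoint x is handled by the
   smoothness of its own interpolant, and the left side of x by the reflection z |-> -z.
   Conversely, if sigma(xi) is infinite, say from the right, pick gaps (a_n, b_n)
   accumulating at xi with b_n - xi > (n + 2)(b_n - a_n) and lengths at least halving,
   and let f(y) be the length of the first gap between xi and y.  Then f is locally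
   constant on K \ {xi} and o(|y - xi|) at xi, so f is in C^1(K) with f' = 0; but a C^1
   extension g would have slope >= 1/2 somewhere in every gap although g'(xi) = 0. *)

From Stdlib Require Import Reals Rtopology Lra Lia ClassicalEpsilon FunctionalExtensionality Wf_nat.
From Coquelicot Require Import Rcomplements Hierarchy Derive AutoDerive.
Open Scope R_scope.

(** * Nearest points of a closed set *)

Definition left_nearest (K : R -> Prop) (y a : R) : Prop :=
  K a /\ a <= y /\ forall k, K k -> k <= y -> k <= a.

Definition right_nearest (K : R -> Prop) (y b : R) : Prop :=
  K b /\ y <= b /\ forall k, K k -> y <= k -> b <= k.

Lemma left_nearest_unique K y a a' :
  left_nearest K y a -> left_nearest K y a' -> a = a'.
Proof.
  intros [Ka [Hay Ha]] [Ka' [Hay' Ha']]. apply Rle_antisym; auto.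
Qed.

Lemma right_nearest_unique K y b b' :
  right_nearest K y b -> right_nearest K y b' -> b = b'.
Proof.
  intros [Kb [Hby Hb]] [Kb' [Hby' Hb']]. apply Rle_antisym; auto.
Qed.

Lemma left_nearest_mirror K y a :
  left_nearest (fun z => K (- z)) y a <-> right_nearest K (- y) (- a).
Proof.
  split.
  - intros [Ka [Hay Ha]]. repeat split; [exact Ka | lra |].
    intros k Kk Hk. enough (- k <= a) by lra.
    apply Ha; [rewrite Ropp_involutive; exact Kk | lra].
  - intros [Ka [Hay Ha]]. repeat split; [exact Ka | lra |].
    intros k Kk Hk. enough (- a <= - k) by lra. apply Ha; [exact Kk | lra].
Qed.

Lemma right_nearest_mirror K y b :
  right_nearest (fun z => K (- z)) y b <-> left_nearest K (- y) (- b).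
Proof.
  split.
  - intros [Kb [Hby Hb]]. repeat split; [exact Kb | lra |].
    intros k Kk Hk. enough (b <= - k) by lra.
    apply Hb; [rewrite Ropp_involutive; exact Kk | lra].
  - intros [Kb [Hby Hb]]. repeat split; [exact Kb | lra |].
    intros k Kk Hk. enough (- k <= - b) by lra. apply Hb; [exact Kk | lra].
Qed.

Lemma closed_set_mirror K : closed_set K -> closed_set (fun z => K (- z)).
Proof.
  intros HK x Kx. destruct (HK (- x) Kx) as [d Hd].
  exists d. intros y Hy. apply Hd. unfold disc in *.
  replace (- y - - x) with (- (y - x)) by ring. rewrite Rabs_Ropp. exact Hy.
Qed.

Lemma left_nearest_exists K y k :
  closed_set K -> K k -> k <= y -> exists a, left_nearest K y a.
Proof.
  intros HK Kk Hky.
  destruct (completeness (fun z => K z /\ z <= y)) as [s [Hub Hleast]].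
  - exists y. intros z [_ Hz]. exact Hz.
  - exists k. split; assumption.
  - assert (Hsy : s <= y) by (apply Hleast; intros z [_ Hz]; exact Hz).
    exists s. repeat split; [| exact Hsy | intros z Kz Hz; apply Hub; split; assumption].
    apply NNPP. intros Ks. destruct (HK s Ks) as [d Hd].
    assert (Hub' : is_upper_bound (fun z => K z /\ z <= y) (s - d / 2)).
    { intros z [Kz Hz]. destruct (Rle_lt_dec z (s - d / 2)) as [|Hlt]; [assumption |].
      exfalso. apply (Hd z); [| exact Kz]. unfold disc.
      pose proof (Hub z (conj Kz Hz)). pose proof (cond_pos d). apply Rabs_def1; lra. }
    pose proof (Hleast _ Hub'). pose proof (cond_pos d). lra.
Qed.

Lemma right_nearest_exists K y k :
  closed_set K -> K k -> y <= k -> exists b, right_nearest K y b.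
Proof.
  intros HK Kk Hyk.
  destruct (left_nearest_exists (fun z => K (- z)) (- y) (- k)) as [a Ha].
  - apply closed_set_mirror, HK.
  - rewrite Ropp_involutive. exact Kk.
  - lra.
  - exists (- a). apply left_nearest_mirror in Ha. rewrite Ropp_involutive in Ha. exact Ha.
Qed.

Lemma nearest_gap K y a b :
  ~ K y -> left_nearest K y a -> right_nearest K y b -> gap K a b.
Proof.
  intros Ky [Ka [Hay Ha]] [Kb [Hby Hb]].
  assert (a <> y) by (intros ->; contradiction).
  assert (b <> y) by (intros ->; contradiction).
  repeat split; [lra | | exact Ka | exact Kb].
  intros z Hz Kz. destruct (Rle_lt_dec z y).
  - pose proof (Ha z Kz ltac:(lra)). lra.
  - pose proof (Hb z Kz ltac:(lra)). lra.
Qed.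

(** * Cubic Hermite interpolation *)

Record cubic := Cubic
  { cubic_center : R; cubic_c0 : R; cubic_c1 : R; cubic_c2 : R; cubic_c3 : R }.

Definition cubic_eval (p : cubic) (z : R) : R :=
  cubic_c0 p + cubic_c1 p * (z - cubic_center p) + cubic_c2 p * (z - cubic_center p) ^ 2
  + cubic_c3 p * (z - cubic_center p) ^ 3.

Definition cubic_deriv (p : cubic) (z : R) : R :=
  cubic_c1 p + 2 * cubic_c2 p * (z - cubic_center p) + 3 * cubic_c3 p * (z - cubic_center p) ^ 2.

Lemma derivable_pt_lim_cubic p y : derivable_pt_lim (cubic_eval p) y (cubic_deriv p y).
Proof.
  destruct p. unfold cubic_eval, cubic_deriv; simpl.
  apply is_derive_Reals. auto_derive; [exact I | ring].
Qed.

Lemma continuity_cubic_deriv p : continuity (cubic_deriv p).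
Proof.
  intros y. apply derivable_continuous_pt.
  exists (2 * cubic_c2 p + 6 * cubic_c3 p * (y - cubic_center p)).
  destruct p. unfold cubic_deriv; simpl.
  apply is_derive_Reals. auto_derive; [exact I | ring].
Qed.

Definition tangent_line (a fa da : R) : cubic := Cubic a fa da 0 0.

Lemma tangent_line_eval a fa da z :
  cubic_eval (tangent_line a fa da) z = fa + da * (z - a) /\
  cubic_deriv (tangent_line a fa da) z = da.
Proof. unfold cubic_eval, cubic_deriv, tangent_line; simpl; split; ring. Qed.

(* The cubic with values [fa], [fb] and slopes [da], [db] at [a], [b]. *)
Definition hermite (a b fa fb da db : R) : cubic :=
  let u := (fb - fa) / (b - a) - da in
  let v := db - da in
  Cubic a fa da ((3 * u - v) / (b - a)) ((v - 2 * u) / (b - a) ^ 2).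

Definition hermite_weight (a b fa fb da db : R) : R :=
  12 * Rabs ((fb - fa) / (b - a) - da) + 5 * Rabs (db - da).

Lemma Rabs_affine_le p q s : 0 <= s <= 1 -> Rabs (p + q * s) <= Rabs p + Rabs q.
Proof.
  intros Hs. eapply Rle_trans; [apply Rabs_triang |].
  rewrite Rabs_mult, (Rabs_pos_eq s) by lra.
  pose proof (Rabs_pos q). nra.
Qed.

Lemma hermite_near_left a b fa fb da db y :
  a < b -> a <= y <= b ->
  let s := (y - a) / (b - a) in
  let W := hermite_weight a b fa fb da db in
  Rabs (cubic_eval (hermite a b fa fb da db) y - fa - da * (y - a)) <= (y - a) * (s * W) /\
  Rabs (cubic_deriv (hermite a b fa fb da db) y - da) <= s * W.
Proof.
  intros Hab Hy s W.
  set (u := (fb - fa) / (b - a) - da). set (v := db - da).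
  assert (Hs : 0 <= s <= 1).
  { unfold s. split; [apply Rle_mult_inv_pos; lra |]. apply Rle_div_l; lra. }
  assert (HW : W = 12 * Rabs u + 5 * Rabs v) by reflexivity.
  pose proof (Rabs_pos u). pose proof (Rabs_pos v).
  assert (Hal : Rabs (3 * u - v) <= 3 * Rabs u + Rabs v).
  { unfold Rminus. eapply Rle_trans; [apply Rabs_triang |].
    rewrite Rabs_Ropp, Rabs_mult, (Rabs_pos_eq 3); lra. }
  assert (Hbe : Rabs (v - 2 * u) <= Rabs v + 2 * Rabs u).
  { unfold Rminus. eapply Rle_trans; [apply Rabs_triang |].
    rewrite Rabs_Ropp, Rabs_mult, (Rabs_pos_eq 2); lra. }
  split.
  - replace (cubic_eval (hermite a b fa fb da db) y - fa - da * (y - a))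
      with ((y - a) * (s * ((3 * u - v) + (v - 2 * u) * s)))
      by (unfold cubic_eval, hermite, s, u, v; simpl; field; lra).
    rewrite Rabs_mult, Rabs_mult, (Rabs_pos_eq (y - a)), (Rabs_pos_eq s) by lra.
    apply Rmult_le_compat_l; [lra |]. apply Rmult_le_compat_l; [lra |].
    pose proof (Rabs_affine_le (3 * u - v) (v - 2 * u) s Hs). lra.
  - replace (cubic_deriv (hermite a b fa fb da db) y - da)
      with (s * (2 * (3 * u - v) + 3 * (v - 2 * u) * s))
      by (unfold cubic_deriv, hermite, s, u, v; simpl; field; lra).
    rewrite Rabs_mult, (Rabs_pos_eq s) by lra.
    apply Rmult_le_compat_l; [lra |].
    pose proof (Rabs_affine_le (2 * (3 * u - v)) (3 * (v - 2 * u)) s Hs) as Htri.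
    rewrite !Rabs_mult, (Rabs_pos_eq 2), (Rabs_pos_eq 3) in Htri by lra. lra.
Qed.

Lemma hermite_mirror a b fa fb da db z :
  a < b ->
  cubic_eval (hermite (- b) (- a) fb fa db da) (- z) =
    cubic_eval (hermite a b fa fb (- da) (- db)) z /\
  cubic_deriv (hermite (- b) (- a) fb fa db da) (- z) =
    - cubic_deriv (hermite a b fa fb (- da) (- db)) z.
Proof. intros Hab. unfold cubic_eval, cubic_deriv, hermite; simpl; split; field; lra. Qed.

Definition jet_close (F D x : R) (g g' : R -> R) (e y : R) : Prop :=
  Rabs (g y - F - D * (y - x)) <= e * Rabs (y - x) /\ Rabs (g' y - D) <= e.

Lemma hermite_weight_le a b x F D fa fb da db M e :
  a < b -> x <= a -> b - x <= M * (b - a) ->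
  Rabs (fa - F - D * (a - x)) <= e * (a - x) ->
  Rabs (fb - F - D * (b - x)) <= e * (b - x) ->
  Rabs (da - D) <= e -> Rabs (db - D) <= e ->
  hermite_weight a b fa fb da db <= (24 * M + 22) * e.
Proof.
  intros Hab Hxa HM Hfa Hfb Hda Hdb.
  assert (He : 0 <= e) by (pose proof (Rabs_pos (da - D)); lra).
  assert (Hslope : Rabs ((fb - fa) / (b - a) - D) <= 2 * M * e).
  { replace ((fb - fa) / (b - a) - D)
      with ((fb - F - D * (b - x) - (fa - F - D * (a - x))) / (b - a)) by (field; lra).
    rewrite Rabs_div, (Rabs_pos_eq (b - a)) by lra. apply Rle_div_l; [lra |].
    eapply Rle_trans; [apply Rabs_triang |]. rewrite Rabs_Ropp. nra. }
  unfold hermite_weight.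
  replace ((fb - fa) / (b - a) - da) with (((fb - fa) / (b - a) - D) + (D - da)) by ring.
  replace (db - da) with ((db - D) + (D - da)) by ring.
  pose proof (Rabs_triang ((fb - fa) / (b - a) - D) (D - da)).
  pose proof (Rabs_triang (db - D) (D - da)).
  rewrite Rabs_minus_sym in Hda. lra.
Qed.

Lemma hermite_jet_close a b y x F D fa fb da db M e :
  a < b -> a <= y <= b -> x <= a -> b - x <= M * (b - a) ->
  Rabs (fa - F - D * (a - x)) <= e * (a - x) ->
  Rabs (fb - F - D * (b - x)) <= e * (b - x) ->
  Rabs (da - D) <= e -> Rabs (db - D) <= e ->
  jet_close F D x (cubic_eval (hermite a b fa fb da db))
    (cubic_deriv (hermite a b fa fb da db)) (24 * (M + 1) * e) y.
Proof.
  intros Hab Hy Hxa HM Hfa Hfb Hda Hdb.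
  assert (He : 0 <= e) by (pose proof (Rabs_pos (da - D)); lra).
  pose proof (hermite_weight_le a b x F D fa fb da db M e Hab Hxa HM Hfa Hfb Hda Hdb) as HW.
  destruct (hermite_near_left a b fa fb da db y Hab Hy) as [Bval Bder].
  set (s := (y - a) / (b - a)) in *. set (W := hermite_weight a b fa fb da db) in *.
  assert (HM0 : 0 <= M) by nra.
  assert (Hs : 0 <= s <= 1).
  { unfold s. split; [apply Rle_mult_inv_pos; lra |]. apply Rle_div_l; lra. }
  assert (HW0 : 0 <= W).
  { unfold W, hermite_weight.
    pose proof (Rabs_pos ((fb - fa) / (b - a) - da)). pose proof (Rabs_pos (db - da)). lra. }
  assert (HsW : s * W <= W) by nra.
  unfold jet_close. rewrite (Rabs_pos_eq (y - x)) by lra. split.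
  - replace (cubic_eval (hermite a b fa fb da db) y - F - D * (y - x))
      with ((cubic_eval (hermite a b fa fb da db) y - fa - da * (y - a))
            + (fa - F - D * (a - x)) + (da - D) * (y - a)) by ring.
    eapply Rle_trans; [apply Rabs_triang |].
    eapply Rle_trans; [apply Rplus_le_compat_r, Rabs_triang |].
    rewrite Rabs_mult, (Rabs_pos_eq (y - a)) by lra.
    assert ((y - a) * (s * W) <= (y - x) * ((24 * M + 22) * e)) by nra.
    assert (Rabs (da - D) * (y - a) <= e * (y - a)) by nra.
    nra.
  - replace (cubic_deriv (hermite a b fa fb da db) y - D)
      with ((cubic_deriv (hermite a b fa fb da db) y - da) + (da - D)) by ring.
    eapply Rle_trans; [apply Rabs_triang |]. nra.
Qed.

(** * C^1 jets on K and one-sided gap ratios *)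

Definition C1_jet (K : R -> Prop) (f fd : R -> R) : Prop :=
  (forall x, K x -> forall e, 0 < e -> exists d, 0 < d /\
     forall y, K y -> Rabs (y - x) < d -> Rabs (fd y - fd x) < e) /\
  (forall x, K x -> forall e, 0 < e -> exists d, 0 < d /\
     forall y, K y -> Rabs (y - x) < d ->
       Rabs (f y - f x - fd x * (y - x)) <= e * Rabs (y - x)).

Lemma C1_on_iff K f : C1_on K f <-> exists fd, C1_jet K f fd.
Proof.
  split.
  - intros [fd [Hc Hd]]. exists fd. split; [exact Hc |].
    intros x Kx e He. destruct (Hd x Kx e He) as [d [Hd0 Hy]]. exists d. split; [exact Hd0 |].
    intros y Ky Hyx. destruct (Req_dec y x) as [-> | Hne].
    + rewrite !Rminus_diag, Rmult_0_r, Rminus_diag, Rabs_R0. lra.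
    + assert (0 < Rabs (y - x)) by (apply Rabs_pos_lt; lra).
      pose proof (Hy y Ky Hne Hyx) as Hq.
      rewrite Rabs_div, Rabs_Rabsolu in Hq by lra. apply Rlt_div_l in Hq; lra.
  - intros [fd [Hc Hd]]. exists fd. split; [exact Hc |].
    intros x Kx e He. destruct (Hd x Kx (e / 2) ltac:(lra)) as [d [Hd0 Hy]].
    exists d. split; [exact Hd0 |]. intros y Ky Hne Hyx.
    assert (0 < Rabs (y - x)) by (apply Rabs_pos_lt; lra).
    rewrite Rabs_div, Rabs_Rabsolu by lra. apply Rlt_div_l; [lra |].
    pose proof (Hy y Ky Hyx). nra.
Qed.

Lemma C1_jet_mirror K f fd :
  C1_jet K f fd -> C1_jet (fun z => K (- z)) (fun z => f (- z)) (fun z => - fd (- z)).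
Proof.
  intros [Hc Hd]. split.
  - intros x Kx e He. destruct (Hc (- x) Kx e He) as [d [Hd0 Hy]].
    exists d. split; [exact Hd0 |]. intros y Ky Hyx.
    replace (- fd (- y) - - fd (- x)) with (- (fd (- y) - fd (- x))) by ring.
    rewrite Rabs_Ropp. apply Hy; [exact Ky |].
    replace (- y - - x) with (- (y - x)) by ring. rewrite Rabs_Ropp. exact Hyx.
  - intros x Kx e He. destruct (Hd (- x) Kx e He) as [d [Hd0 Hy]].
    exists d. split; [exact Hd0 |]. intros y Ky Hyx.
    replace (y - x) with (- (- y - - x)) by ring. rewrite Rabs_Ropp.
    replace (f (- y) - f (- x) - - fd (- x) * - (- y - - x))
      with (f (- y) - f (- x) - fd (- x) * (- y - - x)) by ring.
    apply Hy; [exact Ky |]. replace (- y - - x) with (- (y - x)) by ring.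
    rewrite Rabs_Ropp. exact Hyx.
Qed.

Definition right_ratio_bounded (K : R -> Prop) (x : R) : Prop :=
  exists e M, 0 < e /\
    forall a b, gap K a b -> x <= a -> b <= x + e -> b - x <= M * (b - a).

Lemma gap_mirror K a b : gap (fun z => K (- z)) a b <-> gap K (- b) (- a).
Proof.
  unfold gap. split.
  - intros [Hab [Hno [Ka Kb]]]. repeat split; [lra | | exact Kb | exact Ka].
    intros z Hz Kz. apply (Hno (- z)); [lra |]. rewrite Ropp_involutive. exact Kz.
  - intros [Hab [Hno [Kb Ka]]]. repeat split; [lra | | exact Ka | exact Kb].
    intros z Hz Kz. apply (Hno (- z)); [lra | exact Kz].
Qed.

Lemma sigma_finite_iff K x :
  K x ->
  sigma_finite K x <->
  right_ratio_bounded K x /\ right_ratio_bounded (fun z => K (- z)) (- x).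
Proof.
  intros Kx. unfold sigma_finite, sigma_eps_le, right_ratio_bounded, gap_ratio. split.
  - intros [e [M [He HM]]]. split; exists e, M; split; try exact He.
    + intros a b Hg Ha Hb. pose proof (proj1 Hg) as Hab.
      pose proof (HM a b Hg ltac:(lra) Hb) as H.
      rewrite (Rabs_pos_eq (a - x)), (Rabs_pos_eq (b - x)), Rmax_right in H by lra.
      apply Rle_div_l in H; lra.
    + intros a b Hg Ha Hb. apply gap_mirror in Hg. pose proof (proj1 Hg) as Hab.
      pose proof (HM (- b) (- a) Hg ltac:(lra) ltac:(lra)) as H.
      rewrite (Rabs_left1 (- b - x)), (Rabs_left1 (- a - x)), Rmax_left in H by lra.
      apply Rle_div_l in H; lra.
  - intros [[e1 [M1 [He1 HM1]]] [e2 [M2 [He2 HM2]]]].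
    exists (Rmin e1 e2), (Rmax M1 M2). split; [apply Rmin_pos; assumption |].
    intros a b Hg Ha Hb.
    pose proof (Rmin_l e1 e2). pose proof (Rmin_r e1 e2).
    pose proof (Rmax_l M1 M2). pose proof (Rmax_r M1 M2).
    pose proof Hg as [Hab [Hno _]].
    apply Rle_div_l; [lra |].
    destruct (Rle_lt_dec x a) as [Hxa | Hax].
    + rewrite (Rabs_pos_eq (a - x)), (Rabs_pos_eq (b - x)), Rmax_right by lra.
      pose proof (HM1 a b Hg Hxa ltac:(lra)). nra.
    + assert (Hbx : b <= x) by (destruct (Rle_lt_dec b x); [assumption | exfalso; exact (Hno x ltac:(lra) Kx)]).
      rewrite (Rabs_left1 (a - x)), (Rabs_left1 (b - x)), Rmax_left by lra.
      assert (Hg2 : gap (fun z => K (- z)) (- b) (- a)).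
      { apply gap_mirror. rewrite !Ropp_involutive. exact Hg. }
      pose proof (HM2 (- b) (- a) Hg2 ltac:(lra) ltac:(lra)). nra.
Qed.

Lemma jet_close_eq F D x g g' h h' e y :
  g y = h y -> g' y = h' y -> jet_close F D x h h' e y -> jet_close F D x g g' e y.
Proof. intros E E'. unfold jet_close. rewrite E, E'. tauto. Qed.

Lemma jet_close_mirror F D x g g' e y :
  jet_close F (- D) (- x) (fun z => g (- z)) (fun z => - g' (- z)) e (- y) ->
  jet_close F D x g g' e y.
Proof.
  unfold jet_close. rewrite Ropp_involutive. intros [H1 H2]. split.
  - replace (y - x) with (- (- y - - x)) by ring. rewrite Rabs_Ropp.
    replace (g y - F - D * - (- y - - x)) with (g y - F - - D * (- y - - x)) by ring.
    exact H1.
  - replace (g' y - D) with (- (- g' y - - D)) by ring. rewrite Rabs_Ropp. exact H2.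
Qed.

Lemma hermite_jet_close_left_end a b fa fb da db eps :
  a < b -> 0 < eps -> exists delta, 0 < delta /\
    forall y, a < y < a + delta ->
      jet_close fa da a (cubic_eval (hermite a b fa fb da db))
        (cubic_deriv (hermite a b fa fb da db)) eps y.
Proof.
  intros Hab Heps. set (W := hermite_weight a b fa fb da db).
  assert (HW : 0 <= W).
  { unfold W, hermite_weight.
    pose proof (Rabs_pos ((fb - fa) / (b - a) - da)). pose proof (Rabs_pos (db - da)). lra. }
  exists (Rmin (b - a) ((b - a) * (eps / (W + 1)))). split.
  { apply Rmin_pos; [lra |]. apply Rmult_lt_0_compat; [lra | apply Rdiv_lt_0_compat; lra]. }
  intros y Hy.
  pose proof (Rmin_l (b - a) ((b - a) * (eps / (W + 1)))).
  pose proof (Rmin_r (b - a) ((b - a) * (eps / (W + 1)))).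
  destruct (hermite_near_left a b fa fb da db y Hab ltac:(lra)) as [Bval Bder]. fold W in Bval, Bder.
  set (s := (y - a) / (b - a)) in *.
  assert (Hs : s <= eps / (W + 1)) by (unfold s; apply Rle_div_l; lra).
  assert (Hs0 : 0 <= s) by (unfold s; apply Rle_mult_inv_pos; lra).
  assert (HsW : s * W <= eps).
  { assert (s * (W + 1) <= eps) by (apply Rle_div_r; lra). nra. }
  unfold jet_close. rewrite (Rabs_pos_eq (y - a)) by lra. split.
  - eapply Rle_trans; [exact Bval |]. nra.
  - lra.
Qed.

Section OneSided.

Variables (K : R -> Prop) (f fd g g' : R -> R).
Hypothesis K_closed : closed_set K.
Hypothesis g_on_gap : forall y a b, ~ K y -> left_nearest K y a -> right_nearest K y b ->
  g y = cubic_eval (hermite a b (f a) (f b) (fd a) (fd b)) y /\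
  g' y = cubic_deriv (hermite a b (f a) (f b) (fd a) (fd b)) y.
Hypothesis g_beyond : forall y a, ~ K y -> left_nearest K y a -> (forall k, K k -> k < y) ->
  g y = f a + fd a * (y - a) /\ g' y = fd a.

Lemma jet_close_right_window x k rho M e :
  K x -> K k -> x < k < x + rho ->
  (forall y, K y -> Rabs (y - x) < rho ->
     Rabs (fd y - fd x) <= e /\ Rabs (f y - f x - fd x * (y - x)) <= e * Rabs (y - x)) ->
  (forall a b, gap K a b -> x <= a -> b < x + rho -> b - x <= M * (b - a)) ->
  forall y, x < y < k -> ~ K y -> jet_close (f x) (fd x) x g g' (24 * (M + 1) * e) y.
Proof.
  intros Kx Kk Hk Hjet HM y Hy Ky.
  destruct (left_nearest_exists K y x K_closed Kx ltac:(lra)) as [a Ha].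
  destruct (right_nearest_exists K y k K_closed Kk ltac:(lra)) as [b Hb].
  pose proof (nearest_gap K y a b Ky Ha Hb) as Hgap.
  destruct (g_on_gap y a b Ky Ha Hb) as [E E'].
  destruct Ha as [Ka [Hay Ha]], Hb as [Kb [Hyb Hb]].
  assert (Hxa : x <= a) by (apply Ha; [exact Kx | lra]).
  assert (Hbk : b <= k) by (apply Hb; [exact Kk | lra]).
  destruct (Hjet a Ka ltac:(rewrite Rabs_pos_eq; lra)) as [Hda Hfa].
  destruct (Hjet b Kb ltac:(rewrite Rabs_pos_eq; lra)) as [Hdb Hfb].
  rewrite (Rabs_pos_eq (a - x)) in Hfa by lra. rewrite (Rabs_pos_eq (b - x)) in Hfb by lra.
  apply (jet_close_eq _ _ _ _ _ _ _ _ _ E E').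
  pose proof (proj1 Hgap) as Hab. pose proof (HM a b Hgap Hxa ltac:(lra)) as Hratio.
  apply hermite_jet_close; assumption || lra.
Qed.

Lemma jet_close_right_isolated x rho :
  K x -> 0 < rho -> (forall k, K k -> x < k -> x + rho <= k) -> (exists k, K k /\ x < k) ->
  forall eps, 0 < eps -> exists delta, 0 < delta /\
    forall y, x < y < x + delta -> ~ K y -> jet_close (f x) (fd x) x g g' eps y.
Proof.
  intros Kx Hrho Hiso [k [Kk Hxk]] eps Heps.
  pose proof (Hiso k Kk Hxk).
  destruct (right_nearest_exists K (x + rho / 2) k K_closed Kk ltac:(lra)) as [b Hb].
  pose proof Hb as [Kb [Hbr Hbmin]].
  pose proof (Hiso b Kb ltac:(lra)) as Hxb.
  destruct (hermite_jet_close_left_end x b (f x) (f b) (fd x) (fd b) eps ltac:(lra) Heps)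
    as [delta [Hdelta Hend]].
  exists (Rmin rho delta). split; [apply Rmin_pos; assumption |].
  intros y Hy Ky. pose proof (Rmin_l rho delta). pose proof (Rmin_r rho delta).
  assert (Hleft : left_nearest K y x).
  { repeat split; [exact Kx | lra |]. intros k' Kk' Hk'.
    destruct (Rle_lt_dec k' x) as [| Hlt]; [assumption |]. pose proof (Hiso k' Kk' Hlt). lra. }
  assert (Hright : right_nearest K y b).
  { repeat split; [exact Kb | lra |]. intros k' Kk' Hk'.
    apply Hbmin; [exact Kk' |]. pose proof (Hiso k' Kk' ltac:(lra)). lra. }
  destruct (g_on_gap y x b Ky Hleft Hright) as [E E'].
  apply (jet_close_eq _ _ _ _ _ _ _ _ _ E E'), Hend. lra.
Qed.

Lemma jet_close_right_beyond x :
  K x -> (forall k, K k -> k <= x) ->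
  forall eps y, 0 <= eps -> x < y -> ~ K y -> jet_close (f x) (fd x) x g g' eps y.
Proof.
  intros Kx Hmax eps y Heps Hy Ky.
  assert (Hleft : left_nearest K y x) by (repeat split; [exact Kx | lra | intros k Kk _; apply Hmax, Kk]).
  destruct (g_beyond y x Ky Hleft) as [E E'].
  { intros k Kk. pose proof (Hmax k Kk). lra. }
  unfold jet_close. rewrite E, E'.
  replace (f x + fd x * (y - x) - f x - fd x * (y - x)) with 0 by ring.
  rewrite Rminus_diag, Rabs_R0. pose proof (Rabs_pos (y - x)). split; nra.
Qed.

Hypothesis f_jet : C1_jet K f fd.

Lemma jet_close_right x :
  K x -> right_ratio_bounded K x ->
  forall eps, 0 < eps -> exists delta, 0 < delta /\
    forall y, x < y < x + delta -> ~ K y -> jet_close (f x) (fd x) x g g' eps y.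
Proof.
  intros Kx [e0 [M [He0 HM]]] eps Heps.
  pose proof (Rabs_pos M) as HM0.
  set (e := eps / (24 * (Rabs M + 1))).
  assert (He : 0 < e) by (unfold e; apply Rdiv_lt_0_compat; lra).
  assert (He_eps : 24 * (Rabs M + 1) * e = eps) by (unfold e; field; lra).
  destruct f_jet as [fd_cont f_tangent].
  destruct (fd_cont x Kx e He) as [d1 [Hd1 H1]].
  destruct (f_tangent x Kx e He) as [d2 [Hd2 H2]].
  set (rho := Rmin e0 (Rmin d1 d2)).
  assert (Hrho : 0 < rho) by (unfold rho; repeat apply Rmin_pos; assumption).
  assert (Hrho_le : rho <= e0 /\ rho <= d1 /\ rho <= d2).
  { unfold rho. pose proof (Rmin_l e0 (Rmin d1 d2)). pose proof (Rmin_r e0 (Rmin d1 d2)).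
    pose proof (Rmin_l d1 d2). pose proof (Rmin_r d1 d2). lra. }
  destruct (classic (exists k, K k /\ x < k < x + rho)) as [[k [Kk Hk]] | Hnone].
  - exists (k - x). split; [lra |]. intros y Hy Ky. rewrite <- He_eps.
    apply (jet_close_right_window x k rho); try assumption; try lra.
    + intros z Kz Hz. split; [apply Rlt_le, H1 | apply H2]; try assumption; lra.
    + intros a b Hgap Hxa Hb. pose proof (proj1 Hgap).
      pose proof (HM a b Hgap Hxa ltac:(lra)). pose proof (Rle_abs M). nra.
  - assert (Hiso : forall k, K k -> x < k -> x + rho <= k).
    { intros k Kk Hxk. apply Rnot_lt_le. intros Hlt. apply Hnone. exists k. auto. }
    destruct (classic (exists k, K k /\ x < k)) as [Hbeyond | Hmax].
    + exact (jet_close_right_isolated x rho Kx Hrho Hiso Hbeyond eps Heps).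
    + exists 1. split; [lra |]. intros y Hy Ky.
      apply jet_close_right_beyond; try assumption; try lra.
      intros k Kk. apply Rnot_lt_le. intros Hlt. apply Hmax. exists k. auto.
Qed.

End OneSided.

Lemma derivable_pt_lim_of_tangent g x l :
  (forall eps, 0 < eps -> exists delta, 0 < delta /\
     forall y, Rabs (y - x) < delta -> Rabs (g y - g x - l * (y - x)) <= eps * Rabs (y - x)) ->
  derivable_pt_lim g x l.
Proof.
  intros H eps Heps. destruct (H (eps / 2) ltac:(lra)) as [d [Hd Hy]].
  exists (mkposreal d Hd). intros h Hh0 Hh. simpl in Hh.
  pose proof (Hy (x + h) ltac:(replace (x + h - x) with h by ring; exact Hh)) as Hb.
  replace (x + h - x) with h in Hb by ring.
  assert (0 < Rabs h) by (apply Rabs_pos_lt; exact Hh0).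
  replace ((g (x + h) - g x) / h - l) with ((g (x + h) - g x - l * h) / h) by (field; exact Hh0).
  rewrite Rabs_div by exact Hh0. apply Rlt_div_l; [lra |]. nra.
Qed.

Lemma continuity_pt_of_bound g x :
  (forall eps, 0 < eps -> exists delta, 0 < delta /\
     forall y, Rabs (y - x) < delta -> Rabs (g y - g x) <= eps) ->
  continuity_pt g x.
Proof.
  intros H eps Heps. destruct (H (eps / 2) ltac:(lra)) as [d [Hd Hy]].
  exists d. split; [exact Hd |]. intros y [_ Hyx]. simpl in *. unfold Rdist in *.
  pose proof (Hy y Hyx). lra.
Qed.

(* [lnear] and [rnear] are junk values when the nearest point does not exist. *)
(** * Extension across the gaps *)

Definition lnear (K : R -> Prop) (y : R) : R := epsilon (inhabits 0) (left_nearest K y).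
Definition rnear (K : R -> Prop) (y : R) : R := epsilon (inhabits 0) (right_nearest K y).

Definition extension_piece (K : R -> Prop) (f fd : R -> R) (y : R) : cubic :=
  let a := lnear K y in
  let b := rnear K y in
  match excluded_middle_informative (exists a, left_nearest K y a),
        excluded_middle_informative (exists b, right_nearest K y b) with
  | left _, left _ => hermite a b (f a) (f b) (fd a) (fd b)
  | left _, right _ => tangent_line a (f a) (fd a)
  | right _, left _ => tangent_line b (f b) (fd b)
  | right _, right _ => tangent_line 0 0 0
  end.

Definition extension (K : R -> Prop) (f fd : R -> R) (y : R) : R :=
  if excluded_middle_informative (K y) then f y
  else cubic_eval (extension_piece K f fd y) y.

Definition extension' (K : R -> Prop) (f fd : R -> R) (y : R) : R :=
  if excluded_middle_informative (K y) then fd y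
  else cubic_deriv (extension_piece K f fd y) y.

Section Extension.

Variables (K : R -> Prop) (f fd : R -> R).

Lemma lnear_spec y a : left_nearest K y a -> lnear K y = a.
Proof.
  intros Ha. apply (left_nearest_unique K y); [| exact Ha].
  unfold lnear. apply epsilon_spec. exists a. exact Ha.
Qed.

Lemma rnear_spec y b : right_nearest K y b -> rnear K y = b.
Proof.
  intros Hb. apply (right_nearest_unique K y); [| exact Hb].
  unfold rnear. apply epsilon_spec. exists b. exact Hb.
Qed.

Lemma extension_on y : K y -> extension K f fd y = f y /\ extension' K f fd y = fd y.
Proof.
  intros Ky. unfold extension, extension'.
  destruct (excluded_middle_informative (K y)); [split; reflexivity | contradiction].
Qed.

Lemma extension_off y : ~ K y ->
  extension K f fd y = cubic_eval (extension_piece K f fd y) y /\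
  extension' K f fd y = cubic_deriv (extension_piece K f fd y) y.
Proof.
  intros Ky. unfold extension, extension'.
  destruct (excluded_middle_informative (K y)); [contradiction | split; reflexivity].
Qed.

Lemma extension_piece_gap y a b :
  left_nearest K y a -> right_nearest K y b ->
  extension_piece K f fd y = hermite a b (f a) (f b) (fd a) (fd b).
Proof.
  intros Ha Hb. unfold extension_piece. rewrite (lnear_spec y a Ha), (rnear_spec y b Hb).
  destruct (excluded_middle_informative _) as [_ | Hn]; [| exfalso; apply Hn; exists a; exact Ha].
  destruct (excluded_middle_informative _) as [_ | Hn]; [| exfalso; apply Hn; exists b; exact Hb].
  reflexivity.
Qed.

Lemma extension_piece_beyond_right y a :
  left_nearest K y a -> (forall b, ~ right_nearest K y b) ->
  extension_piece K f fd y = tangent_line a (f a) (fd a).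
Proof.
  intros Ha Hb. unfold extension_piece. rewrite (lnear_spec y a Ha).
  destruct (excluded_middle_informative _) as [_ | Hn]; [| exfalso; apply Hn; exists a; exact Ha].
  destruct (excluded_middle_informative _) as [[b Hb'] | _]; [exfalso; exact (Hb b Hb') |].
  reflexivity.
Qed.

Lemma extension_piece_beyond_left y b :
  (forall a, ~ left_nearest K y a) -> right_nearest K y b ->
  extension_piece K f fd y = tangent_line b (f b) (fd b).
Proof.
  intros Ha Hb. unfold extension_piece. rewrite (rnear_spec y b Hb).
  destruct (excluded_middle_informative _) as [[a Ha'] | _]; [exfalso; exact (Ha a Ha') |].
  destruct (excluded_middle_informative _) as [_ | Hn]; [| exfalso; apply Hn; exists b; exact Hb].
  reflexivity.
Qed.

Lemma extension_piece_empty y :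
  (forall a, ~ left_nearest K y a) -> (forall b, ~ right_nearest K y b) ->
  extension_piece K f fd y = tangent_line 0 0 0.
Proof.
  intros Ha Hb. unfold extension_piece.
  destruct (excluded_middle_informative _) as [[a Ha'] | _]; [exfalso; exact (Ha a Ha') |].
  destruct (excluded_middle_informative _) as [[b Hb'] | _]; [exfalso; exact (Hb b Hb') |].
  reflexivity.
Qed.

Hypothesis K_closed : closed_set K.

Lemma extension_piece_locally_constant y :
  ~ K y -> exists r, 0 < r /\ forall z, y - r < z < y + r ->
    ~ K z /\ extension_piece K f fd z = extension_piece K f fd y.
Proof.
  intros Ky. destruct (K_closed y Ky) as [r Hr].
  exists r. split; [apply cond_pos |]. intros z Hz.
  assert (Hfar : forall k, K k -> k <= y - r \/ y + r <= k).
  { intros k Kk. destruct (Rle_lt_dec k (y - r)) as [| H1]; [left; assumption |].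
    destruct (Rle_lt_dec (y + r) k) as [| H2]; [right; assumption |].
    exfalso. apply (Hr k); [| exact Kk]. unfold disc. apply Rabs_def1; lra. }
  assert (Hl : forall a, left_nearest K z a <-> left_nearest K y a).
  { intros a. unfold left_nearest.
    split; intros [Ka [Haz Ha]]; (split; [exact Ka |]); pose proof (Hfar a Ka);
      (split; [lra |]); intros k Kk Hk; pose proof (Hfar k Kk); apply Ha; auto; lra. }
  assert (Hr' : forall b, right_nearest K z b <-> right_nearest K y b).
  { intros b. unfold right_nearest.
    split; intros [Kb [Hbz Hb]]; (split; [exact Kb |]); pose proof (Hfar b Kb);
      (split; [lra |]); intros k Kk Hk; pose proof (Hfar k Kk); apply Hb; auto; lra. }
  split.
  { intros Kz. pose proof (Hfar z Kz). lra. }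
  destruct (classic (exists a, left_nearest K y a)) as [[a Ha] | Hna];
    destruct (classic (exists b, right_nearest K y b)) as [[b Hb] | Hnb].
  - rewrite (extension_piece_gap z a b (proj2 (Hl a) Ha) (proj2 (Hr' b) Hb)).
    rewrite (extension_piece_gap y a b Ha Hb). reflexivity.
  - assert (Hnb' : forall b, ~ right_nearest K y b) by (intros b Hb; apply Hnb; exists b; exact Hb).
    rewrite (extension_piece_beyond_right z a (proj2 (Hl a) Ha) (fun b Hb => Hnb' b (proj1 (Hr' b) Hb))).
    rewrite (extension_piece_beyond_right y a Ha Hnb'). reflexivity.
  - assert (Hna' : forall a, ~ left_nearest K y a) by (intros a Ha; apply Hna; exists a; exact Ha).
    rewrite (extension_piece_beyond_left z b (fun a Ha => Hna' a (proj1 (Hl a) Ha)) (proj2 (Hr' b) Hb)).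
    rewrite (extension_piece_beyond_left y b Hna' Hb). reflexivity.
  - assert (Hna' : forall a, ~ left_nearest K y a) by (intros a Ha; apply Hna; exists a; exact Ha).
    assert (Hnb' : forall b, ~ right_nearest K y b) by (intros b Hb; apply Hnb; exists b; exact Hb).
    rewrite (extension_piece_empty z (fun a Ha => Hna' a (proj1 (Hl a) Ha))
               (fun b Hb => Hnb' b (proj1 (Hr' b) Hb))).
    rewrite (extension_piece_empty y Hna' Hnb'). reflexivity.
Qed.

Lemma extension_smooth_off y :
  ~ K y ->
  derivable_pt_lim (extension K f fd) y (extension' K f fd y) /\
  continuity_pt (extension' K f fd) y.
Proof.
  intros Ky. destruct (extension_piece_locally_constant y Ky) as [r [Hr Hloc]].
  set (p := extension_piece K f fd y).
  assert (Hagree : forall z, y - r < z < y + r ->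
    cubic_eval p z = extension K f fd z /\ cubic_deriv p z = extension' K f fd z).
  { intros z Hz. destruct (Hloc z Hz) as [Kz Ep]. rewrite (proj1 (extension_off z Kz)),
      (proj2 (extension_off z Kz)), Ep. split; reflexivity. }
  split.
  - rewrite <- (proj2 (Hagree y ltac:(lra))).
    apply (derivable_pt_lim_locally_ext (cubic_eval p) _ y (y - r) (y + r)); [lra | |].
    + intros z Hz. apply Hagree, Hz.
    + apply derivable_pt_lim_cubic.
  - apply (continuity_pt_locally_ext (cubic_deriv p) _ r y Hr).
    + intros z Hz. unfold Rdist in Hz. apply Hagree. apply Rabs_def2 in Hz. lra.
    + apply continuity_cubic_deriv.
Qed.


Lemma extension_on_gap y a b :
  ~ K y -> left_nearest K y a -> right_nearest K y b ->
  extension K f fd y = cubic_eval (hermite a b (f a) (f b) (fd a) (fd b)) y /\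
  extension' K f fd y = cubic_deriv (hermite a b (f a) (f b) (fd a) (fd b)) y.
Proof.
  intros Ky Ha Hb. rewrite <- (extension_piece_gap y a b Ha Hb). apply extension_off, Ky.
Qed.

Lemma extension_beyond_right y a :
  ~ K y -> left_nearest K y a -> (forall k, K k -> k < y) ->
  extension K f fd y = f a + fd a * (y - a) /\ extension' K f fd y = fd a.
Proof.
  intros Ky Ha Hall. rewrite (proj1 (extension_off y Ky)), (proj2 (extension_off y Ky)).
  rewrite (extension_piece_beyond_right y a Ha). { apply tangent_line_eval. }
  intros b [Kb [Hyb _]]. pose proof (Hall b Kb). lra.
Qed.

Lemma extension_beyond_left y b :
  ~ K y -> right_nearest K y b -> (forall k, K k -> y < k) ->
  extension K f fd y = f b + fd b * (y - b) /\ extension' K f fd y = fd b.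
Proof.
  intros Ky Hb Hall. rewrite (proj1 (extension_off y Ky)), (proj2 (extension_off y Ky)).
  rewrite (extension_piece_beyond_left y b); [apply tangent_line_eval | | exact Hb].
  intros a [Ka [Hay _]]. pose proof (Hall a Ka). lra.
Qed.

Hypothesis f_jet : C1_jet K f fd.
Hypothesis K_sigma : forall x, K x -> sigma_finite K x.

Lemma extension_jet_close_left x :
  K x -> forall eps, 0 < eps -> exists delta, 0 < delta /\
    forall y, x - delta < y < x -> ~ K y ->
      jet_close (f x) (fd x) x (extension K f fd) (extension' K f fd) eps y.
Proof.
  intros Kx eps Heps.
  assert (Kx' : K (- - x)) by (rewrite Ropp_involutive; exact Kx).
  destruct (jet_close_right (fun z => K (- z)) (fun z => f (- z)) (fun z => - fd (- z))
              (fun z => extension K f fd (- z)) (fun z => - extension' K f fd (- z))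
              (closed_set_mirror K K_closed))
    with (x := - x) (eps := eps) as [delta [Hdelta Hjet]].
  - intros z a b Kz Ha Hb.
    apply left_nearest_mirror in Ha. apply right_nearest_mirror in Hb.
    pose proof (proj1 (nearest_gap K (- z) (- b) (- a) Kz Hb Ha)) as Hab.
    destruct (extension_on_gap (- z) (- b) (- a) Kz Hb Ha) as [E E'].
    destruct (hermite_mirror a b (f (- a)) (f (- b)) (fd (- a)) (fd (- b)) z ltac:(lra))
      as [M M'].
    rewrite E, E', M, M', Ropp_involutive. split; reflexivity.
  - intros z a Kz Ha Hall. apply left_nearest_mirror in Ha.
    destruct (extension_beyond_left (- z) (- a) Kz Ha) as [E E'].
    { intros k Kk. enough (- k < z) by lra. apply Hall. rewrite Ropp_involutive. exact Kk. }
    rewrite E, E'. split; ring.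
  - exact (C1_jet_mirror K f fd f_jet).
  - exact Kx'.
  - apply (sigma_finite_iff K x Kx), K_sigma, Kx.
  - exact Heps.
  - exists delta. split; [exact Hdelta |]. intros y Hy Ky.
    apply jet_close_mirror.
    pose proof (Hjet (- y) ltac:(lra) ltac:(rewrite Ropp_involutive; exact Ky)) as H.
    cbv beta in H. rewrite !Ropp_involutive in H. exact H.
Qed.

Lemma extension_jet_close x :
  K x -> forall eps, 0 < eps -> exists delta, 0 < delta /\
    forall y, Rabs (y - x) < delta ->
      jet_close (f x) (fd x) x (extension K f fd) (extension' K f fd) eps y.
Proof.
  intros Kx eps Heps.
  destruct (jet_close_right K f fd (extension K f fd) (extension' K f fd) K_closed
              extension_on_gap extension_beyond_right f_jet x Kx
              (proj1 (proj1 (sigma_finite_iff K x Kx) (K_sigma x Kx))) eps Heps)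
    as [d1 [Hd1 Hright]].
  destruct (extension_jet_close_left x Kx eps Heps) as [d2 [Hd2 Hleft]].
  destruct f_jet as [fd_cont f_tangent].
  destruct (fd_cont x Kx eps Heps) as [d3 [Hd3 H3]].
  destruct (f_tangent x Kx eps Heps) as [d4 [Hd4 H4]].
  set (delta := Rmin (Rmin d1 d2) (Rmin d3 d4)).
  assert (Hle : delta <= d1 /\ delta <= d2 /\ delta <= d3 /\ delta <= d4).
  { unfold delta. pose proof (Rmin_l (Rmin d1 d2) (Rmin d3 d4)).
    pose proof (Rmin_r (Rmin d1 d2) (Rmin d3 d4)).
    pose proof (Rmin_l d1 d2). pose proof (Rmin_r d1 d2).
    pose proof (Rmin_l d3 d4). pose proof (Rmin_r d3 d4). lra. }
  exists delta. split; [unfold delta; repeat apply Rmin_pos; assumption |].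
  intros y Hy. destruct (classic (K y)) as [Ky | Ky].
  - destruct (extension_on y Ky) as [E E']. unfold jet_close. rewrite E, E'. split.
    + apply H4; [exact Ky | lra].
    + apply Rlt_le, H3; [exact Ky | lra].
  - apply Rabs_def2 in Hy. destruct (Rtotal_order y x) as [Hlt | [-> | Hgt]].
    + apply Hleft; [lra | exact Ky].
    + contradiction.
    + apply Hright; [lra | exact Ky].
Qed.

Lemma extension_smooth_on x :
  K x ->
  derivable_pt_lim (extension K f fd) x (extension' K f fd x) /\
  continuity_pt (extension' K f fd) x.
Proof.
  intros Kx. destruct (extension_on x Kx) as [E E'].
  split.
  - apply derivable_pt_lim_of_tangent. intros eps Heps.
    destruct (extension_jet_close x Kx eps Heps) as [d [Hd H]].
    exists d. split; [exact Hd |]. intros y Hy. rewrite E, E'. apply H, Hy.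
  - apply continuity_pt_of_bound. intros eps Heps.
    destruct (extension_jet_close x Kx eps Heps) as [d [Hd H]].
    exists d. split; [exact Hd |]. intros y Hy. rewrite E'. apply H, Hy.
Qed.

End Extension.

Theorem C1_on_extends K f :
  closed_set K -> (forall xi, K xi -> sigma_finite K xi) -> C1_on K f -> C1_restr K f.
Proof.
  intros HK Hsigma Hf. apply C1_on_iff in Hf as [fd Hjet].
  exists (extension K f fd). split.
  - exists (extension' K f fd). split; intros x;
      (destruct (classic (K x)) as [Kx | Kx];
       [apply (extension_smooth_on K f fd HK Hjet Hsigma x Kx)
       | apply (extension_smooth_off K f fd HK x Kx)]).
  - intros x Kx. apply (extension_on K f fd x Kx).
Qed.

Lemma C1_restr_C1_on K f : C1_restr K f -> C1_on K f.
Proof.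
  intros [g [[g' [Hder Hcont]] Hg]]. apply C1_on_iff. exists g'. split.
  - intros x Kx e He. destruct (Hcont x e He) as [d [Hd Hy]].
    exists d. split; [exact Hd |]. intros y Ky Hyx.
    destruct (Req_dec y x) as [-> | Hne]; [rewrite Rminus_diag, Rabs_R0; exact He |].
    apply Hy. split; [split; [exact I | congruence] | exact Hyx].
  - intros x Kx e He. destruct (Hder x e He) as [d Hd].
    exists d. split; [apply cond_pos |]. intros y Ky Hyx.
    rewrite <- (Hg y Ky), <- (Hg x Kx).
    destruct (Req_dec y x) as [-> | Hne].
    + rewrite !Rminus_diag, Rmult_0_r, Rminus_diag, Rabs_R0. lra.
    + assert (0 < Rabs (y - x)) by (apply Rabs_pos_lt; lra).
      pose proof (Hd (y - x) ltac:(lra) Hyx) as Hq.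
      replace (x + (y - x)) with y in Hq by ring.
      replace (g y - g x - g' x * (y - x)) with (((g y - g x) / (y - x) - g' x) * (y - x))
        by (field; lra).
      rewrite Rabs_mult. nra.
Qed.

(** * A function in C^1(K) without C^1 extension *)

Lemma not_right_ratio_bounded K x :
  ~ right_ratio_bounded K x -> forall e M, 0 < e ->
  exists a b, gap K a b /\ x <= a /\ b <= x + e /\ M * (b - a) < b - x.
Proof.
  intros H e M He. apply NNPP. intros Hn. apply H. exists e, M. split; [exact He |].
  intros a b Hg Ha Hb. apply Rnot_lt_le. intros Hlt. apply Hn. exists a, b. tauto.
Qed.

Lemma inv_INR_succ_lt eps : 0 < eps -> exists n, / (INR n + 1) < eps.
Proof.
  intros Heps. destruct (archimed_cor1 eps Heps) as [[| n] [Hn Hpos]]; [lia |].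
  exists n. rewrite <- S_INR. exact Hn.
Qed.

Section NonExtendable.

Variables (K : R -> Prop) (xi : R).
Hypothesis K_xi : K xi.
Hypothesis bad_gaps : forall e M, 0 < e ->
  exists a b, gap K a b /\ xi <= a /\ b <= xi + e /\ M * (b - a) < b - xi.

Definition bad_gap (e M : R) (p : R * R) : Prop :=
  gap K (fst p) (snd p) /\ xi <= fst p /\ snd p <= xi + e /\ M * (snd p - fst p) < snd p - xi.

Definition pick_gap (e M : R) : R * R := epsilon (inhabits (0, 0)) (bad_gap e M).

(* The radius [glen m / (m + 2)] makes the lengths at least halve and the gaps tend to [xi]. *)
Fixpoint gap_seq (n : nat) : R * R :=
  match n with
  | O => pick_gap 1 2
  | S m => pick_gap ((snd (gap_seq m) - fst (gap_seq m)) / (INR m + 2)) (INR (S m) + 2)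
  end.

Definition ga (n : nat) : R := fst (gap_seq n).
Definition gb (n : nat) : R := snd (gap_seq n).
Definition glen (n : nat) : R := gb n - ga n.

Lemma pick_gap_spec e M : 0 < e -> bad_gap e M (pick_gap e M).
Proof.
  intros He. unfold pick_gap. apply epsilon_spec.
  destruct (bad_gaps e M He) as [a [b H]]. exists (a, b). exact H.
Qed.

Lemma gap_seq_spec n :
  gap K (ga n) (gb n) /\ xi <= ga n /\ (INR n + 2) * glen n < gb n - xi.
Proof.
  assert (H : forall n, exists e, 0 < e /\ bad_gap e (INR n + 2) (gap_seq n)).
  { intros k. induction k as [| m [e [He [Hg _]]]].
    - exists 1. split; [lra |]. simpl. rewrite Rplus_0_l. apply pick_gap_spec. lra.
    - pose proof (proj1 Hg) as Hab. pose proof (pos_INR m).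
      assert (Hpos : 0 < (snd (gap_seq m) - fst (gap_seq m)) / (INR m + 2))
        by (apply Rdiv_lt_0_compat; lra).
      eexists. split; [exact Hpos | apply pick_gap_spec, Hpos]. }
  destruct (H n) as [e [_ [Hg [Ha [_ Hr]]]]]. tauto.
Qed.

Lemma gb_0 : gb 0 - xi <= 1.
Proof.
  pose proof (pick_gap_spec 1 2 ltac:(lra)) as [_ [_ [Hb _]]].
  change (gb 0) with (snd (pick_gap 1 2)). lra.
Qed.

Lemma gb_S n : gb (S n) - xi <= glen n / (INR n + 2).
Proof.
  pose proof (proj1 (proj1 (gap_seq_spec n))). pose proof (pos_INR n).
  pose proof (pick_gap_spec (glen n / (INR n + 2)) (INR (S n) + 2)) as Hs.
  destruct Hs as [_ [_ [Hb _]]]; [apply Rdiv_lt_0_compat; unfold glen; lra |].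
  change (gb (S n)) with (snd (pick_gap (glen n / (INR n + 2)) (INR (S n) + 2))). lra.
Qed.

Lemma glen_pos n : 0 < glen n.
Proof. pose proof (proj1 (proj1 (gap_seq_spec n))). unfold glen. lra. Qed.

Lemma glen_lt_dist n : glen n < gb n - xi.
Proof.
  destruct (gap_seq_spec n) as [_ [_ Hr]]. pose proof (glen_pos n). pose proof (pos_INR n). nra.
Qed.

Lemma glen_S n : glen (S n) <= glen n / 2.
Proof.
  pose proof (glen_lt_dist (S n)). pose proof (gb_S n). pose proof (glen_pos n).
  pose proof (pos_INR n).
  assert (glen n / (INR n + 2) <= glen n / 2).
  { apply Rmult_le_compat_l; [lra |]. apply Rinv_le_contravar; lra. }
  lra.
Qed.

Lemma glen_antitone m n : (m <= n)%nat -> glen n <= glen m.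
Proof.
  induction 1 as [| n _ IH]; [lra |]. pose proof (glen_S n). pose proof (glen_pos n). lra.
Qed.

Lemma gb_S_lt_ga n : gb (S n) < ga n.
Proof.
  destruct (gap_seq_spec n) as [_ [_ Hr]]. pose proof (gb_S n) as Hb.
  pose proof (glen_pos n). pose proof (pos_INR n).
  assert (glen n / (INR n + 2) <= glen n / 2).
  { apply Rmult_le_compat_l; [lra |]. apply Rinv_le_contravar; lra. }
  unfold glen in *. nra.
Qed.

Lemma gb_lt_ga m n : (m < n)%nat -> gb n < ga m.
Proof.
  induction 1 as [| n _ IH]; [apply gb_S_lt_ga |].
  pose proof (gb_S_lt_ga n). pose proof (glen_pos n). unfold glen in *. lra.
Qed.

Lemma gb_dist n : gb n - xi <= / (INR n + 1).
Proof.
  induction n as [| n IH].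
  - simpl. rewrite Rplus_0_l, Rinv_1. apply gb_0.
  - pose proof (gb_S n). pose proof (glen_lt_dist n). pose proof (glen_pos n).
    pose proof (pos_INR n). rewrite S_INR.
    assert (/ (INR n + 1) <= 1) by (rewrite <- Rinv_1; apply Rinv_le_contravar; lra).
    apply (Rle_trans _ (glen n / (INR n + 2))); [assumption |].
    unfold Rdiv. rewrite <- (Rmult_1_l (/ (INR n + 1 + 1))).
    replace (INR n + 1 + 1) with (INR n + 2) by ring.
    apply Rmult_le_compat_r; [apply Rlt_le, Rinv_0_lt_compat; lra | lra].
Qed.

Definition first_crossed (y : R) : nat :=
  epsilon (inhabits 0%nat) (fun n => gb n <= y /\ forall m, gb m <= y -> (n <= m)%nat).

Definition bad_fun (y : R) : R :=
  if excluded_middle_informative (exists n, gb n <= y) then glen (first_crossed y) else 0.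

Lemma first_crossed_spec y :
  (exists n, gb n <= y) ->
  gb (first_crossed y) <= y /\ forall m, gb m <= y -> (first_crossed y <= m)%nat.
Proof.
  intros Hex. unfold first_crossed. apply epsilon_spec.
  destruct (dec_inh_nat_subset_has_unique_least_element (fun n => gb n <= y)) as [n [Hn _]].
  - intros n. apply classic.
  - exact Hex.
  - exists n. exact Hn.
Qed.

Lemma bad_fun_eq y n :
  gb n <= y -> (forall m, (m < n)%nat -> y < gb m) -> bad_fun y = glen n.
Proof.
  intros Hn Hmin. unfold bad_fun.
  destruct (excluded_middle_informative _) as [Hex | Hno]; [| exfalso; apply Hno; exists n; exact Hn].
  destruct (first_crossed_spec y Hex) as [H1 H2]. f_equal.
  apply Nat.le_antisymm; [apply H2, Hn |].
  destruct (Nat.le_gt_cases n (first_crossed y)) as [| Hlt]; [assumption |].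
  pose proof (Hmin _ Hlt). lra.
Qed.

Lemma bad_fun_zero y : (forall n, y < gb n) -> bad_fun y = 0.
Proof.
  intros H. unfold bad_fun.
  destruct (excluded_middle_informative _) as [[n Hn] | _]; [| reflexivity].
  pose proof (H n). lra.
Qed.

Lemma bad_fun_cases y : bad_fun y = 0 \/ exists n, gb n <= y /\ bad_fun y = glen n.
Proof.
  unfold bad_fun. destruct (excluded_middle_informative _) as [Hex | _]; [| left; reflexivity].
  right. exists (first_crossed y). split; [apply (first_crossed_spec y Hex) | reflexivity].
Qed.

Lemma bad_fun_nonneg y : 0 <= bad_fun y.
Proof.
  destruct (bad_fun_cases y) as [-> | [n [_ ->]]]; [lra | apply Rlt_le, glen_pos].
Qed.

Lemma bad_fun_ext y z : (forall n, gb n <= y <-> gb n <= z) -> bad_fun y = bad_fun z.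
Proof.
  intros H. destruct (classic (exists n, gb n <= y)) as [Hex | Hno].
  - destruct (first_crossed_spec y Hex) as [H1 H2].
    rewrite (bad_fun_eq y (first_crossed y)), (bad_fun_eq z (first_crossed y)); try reflexivity.
    + apply H, H1.
    + intros m Hm. destruct (Rle_lt_dec (gb m) z) as [Hmz | ]; [| assumption].
      pose proof (H2 m (proj2 (H m) Hmz)). lia.
    + exact H1.
    + intros m Hm. destruct (Rle_lt_dec (gb m) y) as [Hmy | ]; [| assumption].
      pose proof (H2 m Hmy). lia.
  - rewrite !bad_fun_zero; [reflexivity | |]; intros n; apply Rnot_le_lt; intros Hn;
      apply Hno; exists n; [apply H |]; exact Hn.
Qed.

Lemma bad_fun_gb n : bad_fun (gb n) = glen n.
Proof.
  apply bad_fun_eq; [lra |]. intros m Hm.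
  pose proof (gb_lt_ga m n Hm). pose proof (glen_pos m). unfold glen in *. lra.
Qed.

Lemma bad_fun_ga n : bad_fun (ga n) <= glen n / 2.
Proof.
  pose proof (glen_S n). pose proof (glen_pos (S n)).
  destruct (bad_fun_cases (ga n)) as [-> | [m [Hm ->]]]; [lra |].
  destruct (Nat.le_gt_cases m n) as [Hmn | Hnm].
  - exfalso. destruct (proj1 (Nat.lt_eq_cases m n) Hmn) as [Hlt | ->].
    + pose proof (gb_lt_ga m n Hlt). pose proof (glen_pos n). pose proof (glen_pos m).
      unfold glen in *. lra.
    + pose proof (glen_pos n). unfold glen in *. lra.
  - pose proof (glen_antitone (S n) m Hnm). lra.
Qed.

Lemma crossing_stable u v n :
  K v -> Rabs (u - v) < glen n -> gb n <= u -> gb n <= v.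
Proof.
  intros Kv Huv Hu. destruct (Rle_lt_dec (gb n) v) as [| Hv]; [assumption |].
  destruct (gap_seq_spec n) as [[_ [Hno _]] _].
  assert (v <= ga n) by (destruct (Rle_lt_dec v (ga n)); [assumption | exfalso; exact (Hno v ltac:(lra) Kv)]).
  apply Rabs_def2 in Huv. unfold glen in Huv. lra.
Qed.

Lemma bad_fun_locally_constant x :
  K x -> x <> xi -> exists d, 0 < d /\ forall y, K y -> Rabs (y - x) < d -> bad_fun y = bad_fun x.
Proof.
  intros Kx Hx. destruct (Rtotal_order x xi) as [Hlt | [Heq | Hgt]]; [| contradiction |].
  - exists (xi - x). split; [lra |]. intros y Ky Hy. apply Rabs_def2 in Hy.
    apply bad_fun_ext. intros n. destruct (gap_seq_spec n) as [[Hab _] [Ha _]]. lra.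
  - destruct (inv_INR_succ_lt ((x - xi) / 2) ltac:(lra)) as [n0 Hn0].
    exists (Rmin ((x - xi) / 2) (glen n0)).
    split; [apply Rmin_pos; [lra | apply glen_pos] |]. intros y Ky Hy.
    pose proof (Rmin_l ((x - xi) / 2) (glen n0)). pose proof (Rmin_r ((x - xi) / 2) (glen n0)).
    apply bad_fun_ext. intros n. destruct (Nat.le_gt_cases n0 n) as [Hn | Hn].
    + pose proof (gb_dist n). pose proof (pos_INR n0). pose proof (le_INR _ _ Hn).
      assert (/ (INR n + 1) <= / (INR n0 + 1)) by (apply Rinv_le_contravar; lra).
      apply Rabs_def2 in Hy. lra.
    + pose proof (glen_antitone n n0 (Nat.lt_le_incl _ _ Hn)).
      split; intros Hc.
      * apply (crossing_stable y x n Kx); [lra | exact Hc].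
      * apply (crossing_stable x y n Ky); [rewrite Rabs_minus_sym; lra | exact Hc].
Qed.

Lemma bad_fun_C1 : C1_on K bad_fun.
Proof.
  apply C1_on_iff. exists (fun _ => 0). split.
  - intros x _ e He. exists 1. split; [lra |]. intros. rewrite Rminus_diag, Rabs_R0. exact He.
  - intros x Kx e He. cbv beta.
    destruct (Req_dec x xi) as [-> | Hx].
    + destruct (inv_INR_succ_lt e He) as [n0 Hn0].
      exists (glen n0). split; [apply glen_pos |]. intros y Ky Hy.
      rewrite Rmult_0_l, Rminus_0_r.
      assert (E0 : bad_fun xi = 0).
      { apply bad_fun_zero. intros n. destruct (gap_seq_spec n) as [[Hab _] [Ha _]]. lra. }
      rewrite E0, Rminus_0_r, Rabs_pos_eq by apply bad_fun_nonneg.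
      destruct (bad_fun_cases y) as [-> | [n [Hn ->]]].
      { pose proof (Rabs_pos (y - xi)). nra. }
      (* gap [n] separates [y] from [xi], so it cannot be among the first [n0] gaps *)
      destruct (gap_seq_spec n) as [_ [_ Hr]].
      assert (Hn0n : (n0 <= n)%nat).
      { destruct (Nat.le_gt_cases n0 n) as [| Hlt]; [assumption |].
        pose proof (glen_antitone n n0 (Nat.lt_le_incl _ _ Hlt)). pose proof (glen_lt_dist n).
        apply Rabs_def2 in Hy. lra. }
      pose proof (le_INR _ _ Hn0n). pose proof (pos_INR n0). pose proof (glen_pos n).
      assert (Hlen : glen n * (INR n0 + 1) < y - xi) by nra.
      assert (0 < y - xi) by nra.
      assert (Hinv : 0 < / (INR n0 + 1)) by (apply Rinv_0_lt_compat; lra).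
      assert (glen n = glen n * (INR n0 + 1) * / (INR n0 + 1)) by (field; lra).
      rewrite Rabs_pos_eq by lra. nra.
    + destruct (bad_fun_locally_constant x Kx Hx) as [d [Hd Hloc]].
      exists d. split; [exact Hd |]. intros y Ky Hy.
      rewrite Rmult_0_l, Rminus_0_r, (Hloc y Ky Hy), Rminus_diag, Rabs_R0.
      apply Rmult_le_pos; [lra | apply Rabs_pos].
Qed.

Lemma bad_fun_not_C1_restr : ~ C1_restr K bad_fun.
Proof.
  intros [g [[g' [Hder Hcont]] Hg]].
  assert (E0 : g xi = 0).
  { rewrite (Hg xi K_xi). apply bad_fun_zero.
    intros n. destruct (gap_seq_spec n) as [[Hab _] [Ha _]]. lra. }
  destruct (Hcont xi (1 / 8) ltac:(lra)) as [d1 [Hd1 H1]].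
  destruct (Hder xi (1 / 8) ltac:(lra)) as [d0 H0].
  pose proof (cond_pos d0).
  destruct (inv_INR_succ_lt (Rmin (Rmin d0 d1) (1 / 8))) as [n Hn].
  { repeat apply Rmin_pos; lra. }
  pose proof (Rmin_l (Rmin d0 d1) (1 / 8)). pose proof (Rmin_r (Rmin d0 d1) (1 / 8)).
  pose proof (Rmin_l d0 d1). pose proof (Rmin_r d0 d1).
  destruct (gap_seq_spec n) as [[Hab [_ [Ka Kb]]] [Ha Hr]].
  pose proof (gb_dist n). pose proof (glen_pos n). pose proof (pos_INR n).
  assert (Hn8 : 8 < INR n + 1).
  { destruct (Rlt_le_dec 8 (INR n + 1)) as [| Hle]; [assumption |].
    pose proof (Rinv_le_contravar (INR n + 1) 8 ltac:(lra) Hle). assert (/ 8 = 1 / 8) by field. lra. }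
  (* slope of [g] from [xi] to the far end of gap [n] is below [1/8], hence [g' xi < 1/4] *)
  assert (Hslope : glen n / (gb n - xi) < 1 / 8).
  { apply Rlt_div_l; [nra |]. nra. }
  assert (Hxi : g' xi < 1 / 4).
  { pose proof (H0 (gb n - xi) ltac:(nra) ltac:(rewrite Rabs_pos_eq; lra)) as Hq.
    replace (xi + (gb n - xi)) with (gb n) in Hq by ring.
    rewrite (Hg _ Kb), bad_fun_gb, E0, Rminus_0_r in Hq.
    apply Rabs_def2 in Hq. unfold glen in *. lra. }
  (* across gap [n] itself, [g] rises by at least half the gap length *)
  destruct (MVT_cor2 g g' (ga n) (gb n) Hab (fun c _ => Hder c)) as [c [Hmvt Hc]].
  rewrite (Hg _ Ka), (Hg _ Kb), bad_fun_gb in Hmvt.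
  pose proof (bad_fun_ga n). fold (glen n) in Hmvt.
  assert (Hc' : 1 / 2 <= g' c) by (unfold glen in *; nra).
  assert (Hnear : Rabs (g' c - g' xi) < 1 / 8).
  { apply (H1 c). split; [split; [exact I | lra] |]. simpl. unfold Rdist.
    rewrite Rabs_pos_eq; lra. }
  apply Rabs_def2 in Hnear. lra.
Qed.

End NonExtendable.

Lemma exists_C1_not_extendable K xi :
  K xi -> ~ right_ratio_bounded K xi -> exists f, C1_on K f /\ ~ C1_restr K f.
Proof.
  intros Kxi Hunb. pose proof (not_right_ratio_bounded K xi Hunb) as Hgaps.
  exists (bad_fun K xi). split.
  - exact (bad_fun_C1 K xi Hgaps).
  - exact (bad_fun_not_C1_restr K xi Kxi Hgaps).
Qed.

Lemma C1_on_mirror K f : C1_on K f -> C1_on (fun z => K (- z)) (fun z => f (- z)).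
Proof.
  intros Hf. apply C1_on_iff in Hf as [fd Hjet]. apply C1_on_iff.
  exists (fun z => - fd (- z)). apply C1_jet_mirror, Hjet.
Qed.

Lemma C1_restr_mirror K f : C1_restr K f -> C1_restr (fun z => K (- z)) (fun z => f (- z)).
Proof.
  intros [g [[g' [Hder Hcont]] Hg]].
  exists (fun z => g (- z)). split.
  - exists (fun z => - g' (- z)). split.
    + intros x. apply (derivable_pt_lim_mirr_fwd g x). rewrite Ropp_involutive. apply Hder.
    + apply (continuity_opp (comp g' (fun z => - z))), continuity_comp; [| exact Hcont].
      apply continuity_opp, derivable_continuous, derivable_id.
  - intros x Kx. apply Hg, Kx.
Qed.

Lemma mirror_involutive {A : Type} (P : R -> A) : (fun z => P (- - z)) = P.
Proof. apply functional_extensionality. intros z. rewrite Ropp_involutive. reflexivity. Qed.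

Theorem mainTheorem17 (K : R -> Prop) (hK : compact K) :
  (forall f : R -> R, C1_on K f <-> C1_restr K f) <->
  (forall xi, K xi -> sigma_finite K xi).
Proof.
  split.
  - intros Hext xi Kxi. apply NNPP. intros Hsigma.
    rewrite (sigma_finite_iff K xi Kxi) in Hsigma.
    apply not_and_or in Hsigma as [Hright | Hleft].
    + destruct (exists_C1_not_extendable K xi Kxi Hright) as [f [Hf Hnf]].
      exact (Hnf (proj1 (Hext f) Hf)).
    + assert (Kxi' : K (- - xi)) by (rewrite Ropp_involutive; exact Kxi).
      destruct (exists_C1_not_extendable _ (- xi) Kxi' Hleft) as [h [Hh Hnh]].
      apply C1_on_mirror in Hh. rewrite mirror_involutive in Hh.
      apply Hext, C1_restr_mirror in Hh. rewrite mirror_involutive in Hh.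
      exact (Hnh Hh).
  - intros Hsigma f. split.
    + apply C1_on_extends; [apply compact_P2, hK | exact Hsigma].
    + apply C1_restr_C1_on.
Qed.
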